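(* For all $x\ge \tfrac{11}{2}$, $|w_0(x)|\le \tfrac{15}{2}x^{-10}$ (i.e. $\sup_{x\ge 11/2}x^{10}|w_0(x)|\le \tfrac{15}{2}$) and $|w_0'(x)|\le 8.85\,x^{-39/4}$.
   Context: Let $b=\tfrac45(24)^{1/4}$, $a=\tfrac52b$, $N_0(x)=-\tfrac{4412401}{98304\sqrt6}x^{-19/2}\bigl[1-\tfrac{1225}{90049\sqrt6}x^{-5/2}+\tfrac{30625}{2161176}x^{-5}\bigr]$, $\mathcal G_1(x)=x^{-5/8}e^{-ibx^{5/4}}$, $\mathcal G_2(x)=x^{-5/8}e^{ibx^{5/4}}$, and for $x>0$, $w_0(x)=\sum_{j=1}^2\frac{(-1)^j}{ia}\mathcal G_j(x)\int_\infty^x\mathcal G_{3-j}(t)\,t\,N_0(t)\,dt$. *)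

From Stdlib Require Import Reals.
From Coquelicot Require Import Coquelicot.
Open Scope R_scope.

Definition b_const : R := 4/5 * Rpower 24 (1/4).
Definition a_const : R := 5/2 * b_const.

Definition N0 (x : R) : R :=
  - (4412401 / (98304 * sqrt 6)) * Rpower x (-19/2)
    * (1 - 1225 / (90049 * sqrt 6) * Rpower x (-5/2)
         + 30625 / 2161176 * Rpower x (-5)).

Definition cexpi (theta : R) : C := (cos theta, sin theta).

Definition G1 (x : R) : C := (RtoC (Rpower x (-5/8)) * cexpi (- (b_const * Rpower x (5/4))))%C.
Definition G2 (x : R) : C := (RtoC (Rpower x (-5/8)) * cexpi (b_const * Rpower x (5/4)))%C.

Definition int_from_infty (f : R -> C) (x : R) : C :=
  @RInt_gen C_R_CompleteNormedModule f (Rbar_locally p_infty) (at_point x).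

Definition w0 (x : R) : C := (
  (RtoC ((-1) ^ 1) / (Ci * RtoC a_const)) * G1 x
     * int_from_infty (fun t => (G2 t * RtoC (t * N0 t))%C) x
  + (RtoC ((-1) ^ 2) / (Ci * RtoC a_const)) * G2 x
     * int_from_infty (fun t => (G1 t * RtoC (t * N0 t))%C) x)%C.

From Pilot Require Import Defs.
From Stdlib Require Import Reals Lra Lia FunctionalExtensionality.
From Coquelicot Require Import Coquelicot.
Open Scope R_scope.

(* With [k_j(t) = G_j(t) t N0(t)], [w0 = (G2 ∫_∞^x k1 - G1 ∫_∞^x k2) / (i a)].  In the variable
   [σ = t^(1/8)] the kernels are [k_j = F(σ) e^(∓iθ)] with [θ = b σ^10], and two integrations by
   parts against the oscillating factor give [∫_∞^x k_j = A_j(x) - R_j] with an explicit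
   [A_j = (h ± i g) e^(∓iθ)] and [|R_j| ≤ M(σ)], [M] being the primitive of a majorant of the
   second remainder.  The explicit parts combine into [2 t^(-5/8) g / a]; for [w0'] the same holds
   after the terms coming from differentiating the integrals cancel.  What is left is an
   elementary numerical estimate in [v = x^(-5/4) ≤ (11/2)^(-5/4)]. *)

(** * Complex-valued functions of a real variable *)

Lemma is_derive_C_pair (u v : R -> R) (t du dv : R) :
  is_derive u t du -> is_derive v t dv ->
  is_derive (V := C_R_NormedModule) (fun t => (u t, v t) : C) t (du, dv).
Proof.
  intros Hu Hv.
  eapply filterdiff_ext_lin.
  - apply (filterdiff_comp_2 (K := R_AbsRing) (T := R_NormedModule) (U := R_NormedModule)
             (V := R_NormedModule) (W := C_R_NormedModule) u v (fun p q => (p, q)) _ _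
             (fun p q => (p, q)) Hu Hv).
    apply filterdiff_linear, is_linear_ext with (fun p => p); [now intros [] | apply is_linear_id].
  - reflexivity.
Qed.

Lemma is_derive_Re (f : R -> C) (t : R) (df : C) :
  is_derive (V := C_R_NormedModule) f t df -> is_derive (fun t => Re (f t)) t (Re df).
Proof.
  intros Hf. eapply filterdiff_ext_lin.
  - apply (filterdiff_comp f (fun z : C_R_NormedModule => fst z) _ (fun z : C_R_NormedModule => fst z) Hf).
    apply filterdiff_linear, (is_linear_fst (K := R_AbsRing) (U := R_NormedModule) (V := R_NormedModule)).
  - reflexivity.
Qed.

Lemma is_derive_Im (f : R -> C) (t : R) (df : C) :
  is_derive (V := C_R_NormedModule) f t df -> is_derive (fun t => Im (f t)) t (Im df).
Proof.
  intros Hf. eapply filterdiff_ext_lin.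
  - apply (filterdiff_comp f (fun z : C_R_NormedModule => snd z) _ (fun z : C_R_NormedModule => snd z) Hf).
    apply filterdiff_linear, (is_linear_snd (K := R_AbsRing) (U := R_NormedModule) (V := R_NormedModule)).
  - reflexivity.
Qed.

Lemma is_derive_Cmult (f g : R -> C) (t : R) (df dg : C) :
  is_derive (V := C_R_NormedModule) f t df -> is_derive (V := C_R_NormedModule) g t dg ->
  is_derive (V := C_R_NormedModule) (fun t => f t * g t)%C t (df * g t + f t * dg)%C.
Proof.
  intros Hf Hg.
  assert (Hmul : forall u v du dv, is_derive u t du -> is_derive v t dv ->
            is_derive (fun t => u t * v t) t (du * v t + u t * dv)).
  { intros u v du dv Hu Hv. apply (is_derive_mult u v); [exact Hu | exact Hv | intros; apply Rmult_comm]. }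
  apply is_derive_Re in Hf as Hf1. apply is_derive_Im in Hf as Hf2.
  apply is_derive_Re in Hg as Hg1. apply is_derive_Im in Hg as Hg2.
  replace (df * g t + f t * dg)%C with
    ((Re df * Re (g t) + Re (f t) * Re dg) - (Im df * Im (g t) + Im (f t) * Im dg),
     (Re df * Im (g t) + Re (f t) * Im dg) + (Im df * Re (g t) + Im (f t) * Re dg)).
  2:{ destruct df, dg, (f t), (g t); unfold Cplus, Cmult; simpl; f_equal; ring. }
  apply (is_derive_ext (fun t => (Re (f t) * Re (g t) - Im (f t) * Im (g t),
                                  Re (f t) * Im (g t) + Im (f t) * Re (g t)) : C)).
  { reflexivity. }
  apply is_derive_C_pair.
  - apply (is_derive_minus (fun t => Re (f t) * Re (g t)) (fun t => Im (f t) * Im (g t)));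
      apply Hmul; assumption.
  - apply (is_derive_plus (fun t => Re (f t) * Im (g t)) (fun t => Im (f t) * Re (g t)));
      apply Hmul; assumption.
Qed.

Lemma is_derive_cexpi (θ : R -> R) (t dθ : R) :
  is_derive θ t dθ ->
  is_derive (V := C_R_NormedModule) (fun t => cexpi (θ t)) t (Ci * RtoC dθ * cexpi (θ t))%C.
Proof.
  intros Hθ. unfold cexpi.
  replace (Ci * RtoC dθ * (cos (θ t), sin (θ t)))%C with (dθ * - sin (θ t), dθ * cos (θ t)).
  2:{ unfold Cmult, Ci, RtoC; simpl. f_equal; ring. }
  apply is_derive_C_pair.
  - apply (is_derive_comp cos θ); [apply is_derive_cos | exact Hθ].
  - apply (is_derive_comp sin θ); [apply is_derive_sin | exact Hθ].
Qed.

Lemma is_derive_osc (u v θ : R -> R) (t du dv dθ : R) :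
  is_derive u t du -> is_derive v t dv -> is_derive θ t dθ ->
  is_derive (V := C_R_NormedModule) (fun t => ((u t, v t) : C) * cexpi (θ t))%C t
    ((((du, dv) : C) + Ci * RtoC dθ * (u t, v t)) * cexpi (θ t))%C.
Proof.
  intros Hu Hv Hθ.
  replace ((((du, dv) : C) + Ci * RtoC dθ * (u t, v t)) * cexpi (θ t))%C
    with (((du, dv) : C) * cexpi (θ t) + ((u t, v t) : C) * (Ci * RtoC dθ * cexpi (θ t)))%C by ring.
  apply (is_derive_Cmult (fun t => (u t, v t) : C) (fun t => cexpi (θ t)));
    [apply is_derive_C_pair | apply is_derive_cexpi]; assumption.
Qed.

Lemma continuous_osc (u v θ : R -> R) (t : R) :
  ex_derive u t -> ex_derive v t -> ex_derive θ t ->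
  continuous (U := C_R_NormedModule) (fun t => ((u t, v t) : C) * cexpi (θ t))%C t.
Proof.
  intros [du Hu] [dv Hv] [dθ Hθ]. apply (ex_derive_continuous (V := C_R_NormedModule)).
  eexists. apply is_derive_osc; eassumption.
Qed.

Lemma Cmod_cexpi (θ : R) : Cmod (cexpi θ) = 1.
Proof.
  unfold Cmod, cexpi; simpl. rewrite Rmult_1_r, Rmult_1_r, Rplus_comm. fold (Rsqr (sin θ)) (Rsqr (cos θ)).
  rewrite sin2_cos2. apply sqrt_1.
Qed.

Lemma Cmod_pair_le (u v : R) : Cmod (u, v) <= Rabs u + Rabs v.
Proof.
  replace (u, v) with (RtoC u + Ci * RtoC v)%C by (unfold Cplus, Cmult, RtoC, Ci; simpl; f_equal; ring).
  eapply Rle_trans; [apply Cmod_triangle |]. rewrite Cmod_mult, Cmod_Ci, !Cmod_R. lra.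
Qed.

Lemma cexpi_opp_mul (θ : R) : (cexpi (- θ) * cexpi θ)%C = 1%C.
Proof.
  unfold cexpi, Cmult; simpl. rewrite cos_neg, sin_neg.
  apply injective_projections; simpl; [rewrite <- (sin2_cos2 θ); unfold Rsqr |]; ring.
Qed.

(* [(α + i e β) e^(i e θ)]; the signs [e = 1] and [e = -1] treat the conjugate factors [G2] and
   [G1] (and the primitives built from them) at once. *)
Definition osc (α β e θ : R) : C := Cmult (α, e * β) (cexpi (e * θ)).

Lemma Cmod_osc_le (α β e θ : R) : e = 1 \/ e = -1 -> Cmod (osc α β e θ) <= Rabs α + Rabs β.
Proof.
  intros He. unfold osc. rewrite Cmod_mult, Cmod_cexpi, Rmult_1_r.
  eapply Rle_trans; [apply Cmod_pair_le |].
  rewrite Rabs_mult. replace (Rabs e) with 1 by (unfold Rabs; destruct Rcase_abs; lra). lra.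
Qed.

Lemma osc_minus_one (α β θ : R) : osc α β (-1) θ = (Cconj (α, β) * cexpi (- θ))%C.
Proof. unfold osc, Cconj. simpl. do 3 f_equal; ring. Qed.

Lemma osc_one (α β θ : R) : osc α β 1 θ = (((α, β) : C) * cexpi θ)%C.
Proof. unfold osc. rewrite !Rmult_1_l. reflexivity. Qed.

(** * Improper integrals at infinity *)

Lemma minus_plus_cancel_r {G : AbelianGroup} (a b : G) : minus (plus a b) b = a.
Proof. unfold minus. rewrite <- plus_assoc. etransitivity; [apply f_equal, plus_opp_r | apply plus_zero_r]. Qed.

Lemma filterlim_minus_fun {T : Type} {K : AbsRing} {V : NormedModule K}
    {F : (T -> Prop) -> Prop} {FF : Filter F} (f g : T -> V) (a b : V) :
  filterlim f F (locally a) -> filterlim g F (locally b) ->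
  filterlim (fun u => minus (f u) (g u)) F (locally (minus a b)).
Proof.
  intros Hf Hg.
  apply (filterlim_comp_2 (G := locally a) (H := locally (opp b)) f (fun u => opp (g u)) plus);
    [exact Hf | | apply filterlim_plus].
  exact (filterlim_comp _ _ _ g opp F (locally b) (locally (opp b)) Hg (filterlim_opp b)).
Qed.

Lemma eventually_div_lt (c eps : R) : 0 < eps -> Rbar_locally p_infty (fun t => c / t < eps).
Proof.
  intros Heps. exists (Rmax 1 (c / eps)). intros t Ht.
  generalize (Rmax_l 1 (c / eps)) (Rmax_r 1 (c / eps)). intros H1 H2.
  apply Rlt_div_l; [lra |]. rewrite Rmult_comm. apply (Rlt_div_l c t eps Heps). lra.
Qed.

Lemma filterlim_infty_of_le_div {V : NormedModule R_AbsRing} (f : R -> V) (l : V) (x c : R) :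
  (forall t, x <= t -> norm (minus (f t) l) <= c / t) ->
  filterlim f (Rbar_locally p_infty) (locally l).
Proof.
  intros Hf. apply filterlim_locally_ball_norm. intros eps.
  destruct (eventually_div_lt c eps (cond_pos eps)) as [N HN].
  exists (Rmax N x). intros t Ht. generalize (Rmax_l N x) (Rmax_r N x). intros H1 H2.
  eapply Rle_lt_trans; [apply Hf | apply HN]; lra.
Qed.

Lemma filterlim_C_infty_of_Cmod_le (f : R -> C) (x c : R) :
  (forall t, x <= t -> Cmod (f t) <= c / t) ->
  filterlim f (Rbar_locally p_infty) (locally (zero : C_R_CompleteNormedModule)).
Proof.
  intros Hf. apply (filterlim_infty_of_le_div (V := C_R_CompleteNormedModule) _ _ x c).
  intros t Ht. eapply Rle_trans; [apply Req_le | apply Hf, Ht].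
  rewrite Cmod_norm.
  exact (f_equal (@norm R_AbsRing C_R_CompleteNormedModule) (@minus_zero_r C_R_CompleteNormedModule (f t))).
Qed.

Lemma filterlim_infty_of_majorant {V : CompleteNormedModule R_AbsRing} (F : R -> V) (M : R -> R) (x : R) :
  (forall u v, x <= u <= v -> norm (minus (F v) (F u)) <= M u - M v) ->
  (forall t, x <= t -> 0 <= M t) ->
  filterlim M (Rbar_locally p_infty) (locally 0) ->
  exists L, filterlim F (Rbar_locally p_infty) (locally L) /\
            forall u, x <= u -> norm (minus L (F u)) <= M u.
Proof.
  intros HF HM0 HM.
  assert (Hsmall : forall eps : posreal, exists N, forall t, N < t -> x <= t /\ M t < eps).
  { intros eps. destruct (proj1 (filterlim_locally_ball_norm _ _) HM eps) as [N HN].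
    exists (Rmax N x). intros t Ht. generalize (Rmax_l N x) (Rmax_r N x). intros H1 H2.
    specialize (HN t ltac:(lra)). unfold ball_norm, minus, plus, opp in HN; simpl in HN.
    unfold norm in HN; simpl in HN. split; [lra |]. apply Rabs_def2 in HN. lra. }
  set (FF := filtermap F (Rbar_locally p_infty)).
  assert (Hcauchy : cauchy FF).
  { intros eps. destruct (Hsmall eps) as [N HN]. set (t0 := Rmax N x + 1).
    assert (Ht0 : N < t0) by (unfold t0; generalize (Rmax_l N x); lra).
    exists (F t0), t0. intros u Hu. apply (@norm_compat1 R_AbsRing V).
    destruct (HN t0 Ht0) as [Hx0 Hlt]. eapply Rle_lt_trans; [apply HF; lra |].
    generalize (HM0 u ltac:(lra)). lra. }
  assert (HL : filterlim F (Rbar_locally p_infty) (locally (lim FF))).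
  { apply filterlim_locally. apply (complete_cauchy FF); [| exact Hcauchy].
    apply filtermap_proper_filter, Rbar_locally_filter. }
  exists (lim FF). split; [exact HL |].
  intros u Hu. apply Rle_plus_epsilon. intros eps Heps.
  destruct (proj1 (filterlim_locally_ball_norm _ _) HL (mkposreal eps Heps)) as [N HN].
  set (v := Rmax N u + 1).
  assert (HNv : N < v) by (unfold v; generalize (Rmax_l N u); lra).
  assert (Huv : u <= v) by (unfold v; generalize (Rmax_r N u); lra).
  assert (Hv : norm (minus (lim FF) (F v)) < eps).
  { rewrite <- norm_opp, opp_minus. exact (HN v HNv). }
  assert (Hsplit : minus (lim FF) (F u) = plus (minus (lim FF) (F v)) (minus (F v) (F u)))
    by apply minus_trans.
  rewrite Hsplit. eapply Rle_trans; [apply (@norm_triangle R_AbsRing V) |].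
  generalize (HF u v ltac:(lra)) (HM0 v ltac:(lra)). lra.
Qed.

Lemma is_RInt_gen_infty_of_lim {V : NormedModule R_AbsRing} (k I : R -> V) (x : R) (L : V) :
  (forall u, x <= u -> is_RInt k u x (I u)) ->
  filterlim I (Rbar_locally p_infty) (locally L) ->
  is_RInt_gen k (Rbar_locally p_infty) (at_point x) L.
Proof.
  intros HI HL P HP.
  apply Filter_prod with (fun a => x <= a /\ P (I a)) (fun b => b = x).
  - apply filter_and; [exists x; intros; lra | exact (HL P HP)].
  - reflexivity.
  - intros a b [Ha HPa] ->. exists (I a). split; [apply HI |]; assumption.
Qed.

Lemma ex_RInt_continuous_ge {V : CompleteNormedModule R_AbsRing} (r : R -> V) (x u v : R) :
  (forall t, x <= t -> continuous r t) -> x <= u -> x <= v -> ex_RInt r u v.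
Proof.
  intros Hr Hu Hv. apply ex_RInt_continuous. intros z [Hz _]. apply Hr.
  apply Rle_trans with (Rmin u v); [apply Rmin_glb |]; assumption.
Qed.

Lemma norm_RInt_tail_le {V : CompleteNormedModule R_AbsRing} (r : R -> V) (m M : R -> R) (x u v : R) :
  (forall t, x <= t -> continuous r t) ->
  (forall t, x <= t -> norm (r t) <= m t) ->
  (forall t, x <= t -> is_derive M t (- m t)) ->
  (forall t, x <= t -> continuous m t) ->
  x <= u <= v -> norm (minus (RInt r v x) (RInt r u x)) <= M u - M v.
Proof.
  intros Hr Hrm HM Hm Huv.
  assert (HmM : is_RInt m u v (M u - M v)).
  { replace (M u - M v) with (minus (- M v) (- M u)) by (cbv; ring).
    apply (is_RInt_derive (V := R_CompleteNormedModule) (fun t => - M t));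
      rewrite Rmin_left, Rmax_right by lra.
    - intros t Ht. replace (m t) with (- - m t) by ring. apply (is_derive_opp M), HM. lra.
    - intros t Ht. apply Hm. lra. }
  assert (Hvu : is_RInt r v u (opp (RInt r u v))).
  { apply (is_RInt_swap r v u), RInt_correct, (ex_RInt_continuous_ge r x); [exact Hr | lra | lra]. }
  assert (Hv : RInt r v x = plus (opp (RInt r u v)) (RInt r u x)).
  { apply is_RInt_unique, (is_RInt_Chasles r v u x); [exact Hvu |].
    apply RInt_correct, (ex_RInt_continuous_ge r x); [exact Hr | lra | lra]. }
  replace (minus (RInt r v x) (RInt r u x)) with (opp (RInt r u v))
    by (rewrite Hv; symmetry; apply minus_plus_cancel_r).
  rewrite (@norm_opp R_AbsRing V).
  apply (norm_RInt_le r m u v); [lra | intros; apply Hrm; lra | | exact HmM].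
  apply RInt_correct, (ex_RInt_continuous_ge r x); [exact Hr | lra | lra].
Qed.

Lemma is_RInt_gen_by_parts {V : CompleteNormedModule R_AbsRing} (k r A : R -> V) (m M : R -> R) (x : R) :
  (forall t, x <= t -> is_derive A t (plus (k t) (r t))) ->
  (forall t, x <= t -> continuous k t) ->
  (forall t, x <= t -> continuous r t) ->
  (forall t, x <= t -> norm (r t) <= m t) ->
  (forall t, x <= t -> is_derive M t (- m t)) ->
  (forall t, x <= t -> continuous m t) ->
  (forall t, x <= t -> 0 <= M t) ->
  filterlim A (Rbar_locally p_infty) (locally (zero : V)) ->
  filterlim M (Rbar_locally p_infty) (locally 0) ->
  exists R, is_RInt_gen k (Rbar_locally p_infty) (at_point x) (minus (A x) R) /\ norm R <= M x.
Proof.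
  intros HA Hk Hr Hrm HM Hm HM0 HAlim HMlim.
  set (K u := RInt r u x).
  assert (HK : forall u, x <= u -> is_RInt r u x (K u)).
  { intros u Hu. apply RInt_correct, (ex_RInt_continuous_ge r x); [exact Hr | lra | lra]. }
  destruct (filterlim_infty_of_majorant K M x (fun u v => norm_RInt_tail_le r m M x u v Hr Hrm HM Hm)
              HM0 HMlim) as [LK [HKlim HLK]].
  exists LK. split.
  - apply (is_RInt_gen_infty_of_lim k (fun u => minus (minus (A x) (A u)) (K u))).
    + intros u Hu.
      apply (is_RInt_ext (fun t => minus (plus (k t) (r t)) (r t))).
      { intros t _. exact (@minus_plus_cancel_r V (k t) (r t)). }
      apply (is_RInt_minus (fun t => plus (k t) (r t)) r u x); [| apply HK; lra].
      apply (is_RInt_derive A); rewrite Rmin_right, Rmax_left by lra.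
      * intros t Ht. apply HA. lra.
      * intros t Ht. apply (continuous_plus k r); [apply Hk | apply Hr]; lra.
    + replace (minus (A x) LK) with (minus (minus (A x) (zero : V)) LK)
        by (f_equal; exact (minus_zero_r (A x))).
      apply (filterlim_minus_fun (V := V) (fun u => minus (A x) (A u)) K); [| exact HKlim].
      apply (filterlim_minus_fun (V := V) (fun _ => A x) A); [apply filterlim_const | exact HAlim].
  - replace (norm LK) with (norm (minus LK (K x))); [apply HLK, Rle_refl |].
    f_equal. unfold K. rewrite RInt_point. exact (minus_zero_r LK).
Qed.

Lemma int_from_infty_correct (k : R -> C) (x : R) (l : C) :
  is_RInt_gen (V := C_R_NormedModule) k (Rbar_locally p_infty) (at_point x) l ->
  int_from_infty k x = l.
Proof.
  apply (is_RInt_gen_unique (V := C_R_CompleteNormedModule)).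
Qed.

Lemma locally_gt (x0 x : R) : x0 < x -> locally x (fun y => x0 < y).
Proof.
  intros Hx. assert (Hpos : 0 < x - x0) by lra. exists (mkposreal _ Hpos). intros y Hy.
  change (Rabs (y - x) < x - x0) in Hy. apply Rabs_def2 in Hy. lra.
Qed.

Lemma is_derive_int_from_infty (k : R -> C) (x0 x : R) (l : C) :
  is_RInt_gen (V := C_R_NormedModule) k (Rbar_locally p_infty) (at_point x0) l ->
  (forall t, x0 <= t -> continuous (U := C_R_NormedModule) k t) -> x0 < x ->
  is_derive (V := C_R_NormedModule) (int_from_infty k) x (k x).
Proof.
  intros Hl Hk Hx.
  assert (HI : forall y, x0 < y ->
            is_RInt (V := C_R_NormedModule) k x0 y (RInt (V := C_R_CompleteNormedModule) k x0 y)).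
  { intros y Hy. apply (RInt_correct (V := C_R_CompleteNormedModule)), ex_RInt_continuous.
    intros z [Hz _]. apply Hk. rewrite Rmin_left in Hz; lra. }
  apply (is_derive_ext_loc (fun y => plus l (RInt (V := C_R_CompleteNormedModule) k x0 y))).
  { apply (filter_imp (fun y => x0 < y)); [| exact (locally_gt x0 x Hx)].
    intros y Hy. symmetry.
    apply int_from_infty_correct, (is_RInt_gen_Chasles k x0); [exact Hl |].
    apply is_RInt_gen_at_point, HI, Hy. }
  rewrite <- (plus_zero_l (k x)).
  apply (is_derive_plus (K := R_AbsRing) (V := C_R_NormedModule) (fun _ => l));
    [apply (is_derive_const (K := R_AbsRing) (V := C_R_NormedModule)) |].
  apply (is_derive_RInt (V := C_R_NormedModule) k _ x0); [| apply Hk; lra].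
  apply (filter_imp (fun y => x0 < y)); [apply HI | exact (locally_gt x0 x Hx)].
Qed.

(** * The variable σ = t^(1/8) *)

Definition root8 (t : R) : R := Rpower t (1/8).

Lemma root8_pos (t : R) : 0 < root8 t.
Proof. apply exp_pos. Qed.

Lemma Rpower_root8 (t : R) (z : Z) : 0 < t -> Rpower t (IZR z / 8) = powerRZ (root8 t) z.
Proof.
  intros Ht. unfold root8. rewrite powerRZ_Rpower by apply exp_pos.
  rewrite Rpower_mult. f_equal. field.
Qed.

Lemma Rpower_root8_neg (t : R) (n : nat) : 0 < t -> Rpower t (- INR n / 8) = / root8 t ^ n.
Proof.
  intros Ht. rewrite INR_IZR_INZ, <- opp_IZR, Rpower_root8 by exact Ht.
  destruct n as [| n]; [simpl; field |]. simpl. rewrite SuccNat2Pos.id_succ. reflexivity.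
Qed.

Lemma root8_pow8 (t : R) : 0 < t -> root8 t ^ 8 = t.
Proof.
  intros Ht. change (root8 t ^ 8) with (powerRZ (root8 t) 8).
  rewrite <- Rpower_root8 by exact Ht. replace (IZR 8 / 8) with 1 by field. apply Rpower_1, Ht.
Qed.

Lemma root8_ge (c t : R) : 0 < c -> c ^ 8 <= t -> c <= root8 t.
Proof.
  intros Hc Ht. replace c with (Rpower (c ^ 8) (1/8)) at 1.
  - apply Rle_Rpower_l; [lra | split; [apply pow_lt, Hc | exact Ht]].
  - rewrite <- Rpower_pow, Rpower_mult by exact Hc.
    replace (INR 8 * (1/8)) with 1 by (simpl; field). apply Rpower_1, Hc.
Qed.

Lemma is_derive_comp_root8 (f : R -> R) (t df : R) :
  0 < t -> is_derive f (root8 t) df -> is_derive (fun t => f (root8 t)) t (df / (8 * root8 t ^ 7)).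
Proof.
  intros Ht Hf. assert (Hs := root8_pos t).
  replace (df / (8 * root8 t ^ 7)) with (scal (/ (8 * root8 t ^ 7)) df)
    by (cbv [scal mult]; simpl; cbv [mult]; simpl; field; lra).
  apply (is_derive_comp f root8); [exact Hf |].
  apply is_derive_Reals. unfold root8.
  replace (/ (8 * Rpower t (1/8) ^ 7)) with (1/8 * Rpower t (1/8 - 1)).
  { apply derivable_pt_lim_power, Ht. }
  replace (1/8 - 1) with (IZR (-7) / 8) by (simpl; field).
  rewrite Rpower_root8 by exact Ht. unfold root8 in *. simpl. field. lra.
Qed.

Lemma is_derive_inv_pow (n : nat) (σ : R) :
  0 < σ -> is_derive (fun σ => / σ ^ n) σ (- INR n / σ ^ (n + 1)).
Proof.
  intros Hσ. eapply is_derive_ext; [reflexivity |].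
  replace (- INR n / σ ^ (n + 1)) with (- (INR n * 1 * σ ^ Nat.pred n) / (σ ^ n) ^ 2).
  { apply is_derive_inv; [apply is_derive_pow, (is_derive_id (K := R_AbsRing)) | apply pow_nonzero; lra]. }
  destruct n as [| n]; [simpl; field; lra |].
  replace (S n + 1)%nat with (S (S n)) by lia. simpl. field. split; [apply pow_nonzero |]; lra.
Qed.

Lemma is_derive_inv_pow_root8 (n : nat) (t : R) :
  0 < t -> is_derive (fun t => / root8 t ^ n) t (- INR n / 8 / root8 t ^ (n + 8)).
Proof.
  intros Ht. assert (Hs := root8_pos t).
  replace (- INR n / 8 / root8 t ^ (n + 8)) with (- INR n / root8 t ^ (n + 1) / (8 * root8 t ^ 7)).
  { apply (is_derive_comp_root8 (fun σ => / σ ^ n)), is_derive_inv_pow; [exact Ht | exact Hs]. }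
  rewrite !pow_add. field. split; [lra | apply pow_nonzero; lra].
Qed.

(* [p σ^-n + q σ^-(n+20) + r σ^-(n+40)]: for [σ = t^(1/8)] the bracket of [N0] is a polynomial
   in [σ^-20], and every amplitude below has this shape. *)
Definition lacpoly (p q r : R) (n : nat) (σ : R) : R :=
  p / σ ^ n + q / σ ^ (n + 20) + r / σ ^ (n + 40).

Lemma is_derive_lacpoly_root8 (p q r : R) (n : nat) (t : R) : 0 < t ->
  is_derive (fun t => lacpoly p q r n (root8 t)) t
    (lacpoly (- INR n * p / 8) (- INR (n + 20) * q / 8) (- INR (n + 40) * r / 8) (n + 8) (root8 t)).
Proof.
  intros Ht. assert (Hs := root8_pos t). unfold lacpoly, Rdiv.
  replace (n + 8 + 20)%nat with (n + 20 + 8)%nat by lia.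
  replace (n + 8 + 40)%nat with (n + 40 + 8)%nat by lia.
  assert (Hterm : forall c k, is_derive (fun t => c * / root8 t ^ k) t (c * (- INR k / 8 / root8 t ^ (k + 8)))).
  { intros c k. apply is_derive_scal, is_derive_inv_pow_root8, Ht. }
  replace (_ + _ + _) with (plus (plus (p * (- INR n / 8 / root8 t ^ (n + 8)))
                                       (q * (- INR (n + 20) / 8 / root8 t ^ (n + 20 + 8))))
                                 (r * (- INR (n + 40) / 8 / root8 t ^ (n + 40 + 8))))
    by (cbv [plus]; simpl; field; repeat split; apply pow_nonzero; lra).
  apply (is_derive_plus (fun t => p * / root8 t ^ n + q * / root8 t ^ (n + 20))); [| apply Hterm].
  apply (is_derive_plus (fun t => p * / root8 t ^ n)); apply Hterm.
Qed.

Lemma ex_derive_lacpoly_root8 (p q r : R) (n : nat) (t : R) :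
  0 < t -> ex_derive (fun t => lacpoly p q r n (root8 t)) t.
Proof. intros Ht. eexists. apply is_derive_lacpoly_root8, Ht. Qed.

Lemma Rabs_lacpoly_le (p q r : R) (n : nat) (σ : R) :
  0 < σ -> Rabs (lacpoly p q r n σ) <= lacpoly (Rabs p) (Rabs q) (Rabs r) n σ.
Proof.
  intros Hσ. unfold lacpoly.
  assert (Habs : forall c k, Rabs (c / σ ^ k) = Rabs c / σ ^ k).
  { intros c k. unfold Rdiv. rewrite Rabs_mult, Rabs_inv, (Rabs_pos_eq (σ ^ k)); [reflexivity |].
    apply pow_le. lra. }
  rewrite <- !Habs. eapply Rle_trans; [apply Rabs_triang |].
  apply Rplus_le_compat_r, Rabs_triang.
Qed.

Lemma lacpoly_nonneg (p q r : R) (n : nat) (σ : R) :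
  0 < σ -> 0 <= p -> 0 <= q -> 0 <= r -> 0 <= lacpoly p q r n σ.
Proof.
  intros Hσ Hp Hq Hr. unfold lacpoly.
  assert (Hterm : forall c k, 0 <= c -> 0 <= c / σ ^ k).
  { intros c k Hc. apply Rdiv_le_0_compat; [exact Hc | apply pow_lt, Hσ]. }
  generalize (Hterm p n Hp) (Hterm q (n + 20)%nat Hq) (Hterm r (n + 40)%nat Hr). lra.
Qed.

Lemma lacpoly_le_div_pow8 (p q r : R) (n : nat) (σ : R) :
  1 <= σ -> (8 <= n)%nat -> 0 <= p -> 0 <= q -> 0 <= r -> lacpoly p q r n σ <= (p + q + r) / σ ^ 8.
Proof.
  intros Hσ Hn Hp Hq Hr. unfold lacpoly.
  assert (Hterm : forall c k, (8 <= k)%nat -> 0 <= c -> c / σ ^ k <= c / σ ^ 8).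
  { intros c k Hk Hc. apply Rmult_le_compat_l; [exact Hc |].
    apply Rinv_le_contravar; [apply pow_lt; lra | apply Rle_pow; assumption]. }
  generalize (Hterm p n Hn Hp) (Hterm q (n + 20)%nat ltac:(lia) Hq) (Hterm r (n + 40)%nat ltac:(lia) Hr).
  unfold Rdiv. lra.
Qed.

Lemma Rabs_lacpoly_le_div (p q r : R) (n : nat) (t : R) : 1 <= t -> (8 <= n)%nat ->
  Rabs (lacpoly p q r n (root8 t)) <= (Rabs p + Rabs q + Rabs r) / t.
Proof.
  intros Ht Hn. assert (Hσ : 1 <= root8 t) by (apply root8_ge; [lra | rewrite pow1; exact Ht]).
  rewrite <- (root8_pow8 t) at 2 by lra. eapply Rle_trans; [apply Rabs_lacpoly_le; lra |].
  apply lacpoly_le_div_pow8; try apply Rabs_pos; assumption.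
Qed.

(** * Amplitudes *)

Lemma a_const_pos : 0 < a_const.
Proof. unfold a_const, b_const, Rpower. generalize (exp_pos (1/4 * ln 24)). lra. Qed.

Lemma a_const_sqr : a_const ^ 2 = 8 * sqrt 6.
Proof.
  unfold a_const, b_const.
  replace ((5/2 * (4/5 * Rpower 24 (1/4))) ^ 2) with (4 * Rpower 24 (1/4) ^ 2) by field.
  rewrite <- Rpower_pow by apply exp_pos. rewrite Rpower_mult.
  replace (1/4 * INR 2) with (/ 2) by (simpl; field). rewrite Rpower_sqrt by lra.
  replace 24 with (2 * 2 * 6) by lra. rewrite sqrt_mult, sqrt_square by lra. ring.
Qed.

Definition Q0 : R := 4412401 / 1179648.

Definition cN1 : R := 1225 / (90049 * sqrt 6).

Definition cN2 : R := 30625 / 2161176.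

Lemma cN1_pos : 0 < cN1.
Proof. apply Rdiv_lt_0_compat; [lra | apply Rmult_lt_0_compat, sqrt_lt_R0; lra]. Qed.

(* Amplitudes as functions of [σ = t^(1/8)], for which the phase is [θ = b σ^10] with
   [θ' = dphase = (a/2) σ^2]: [Fs σ = t^(-5/8) t N0(t)], [gs = Fs/θ'], [hs = (gs∘σ)'/θ'] and
   [dhs = (hs∘σ)'] (derivatives in [t]); [ms] majorizes [|dhs|] termwise and [Ms' = -ms]. *)
Definition Fs : R -> R :=
  lacpoly (- (Q0 * a_const ^ 2 / 4)) (Q0 * a_const ^ 2 / 4 * cN1) (- (Q0 * a_const ^ 2 / 4 * cN2)) 73.

Definition gs : R -> R :=
  lacpoly (- (Q0 * a_const / 2)) (Q0 * a_const / 2 * cN1) (- (Q0 * a_const / 2 * cN2)) 75.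

Definition hs : R -> R :=
  lacpoly (75 / 8 * Q0) (- (95 / 8 * Q0 * cN1)) (115 / 8 * Q0 * cN2) 85.

Definition dhs : R -> R :=
  lacpoly (- (75 * 85 / 64 * Q0)) (95 * 105 / 64 * Q0 * cN1) (- (115 * 125 / 64 * Q0 * cN2)) 93.

Definition ms : R -> R :=
  lacpoly (75 * 85 / 64 * Q0) (95 * 105 / 64 * Q0 * cN1) (115 * 125 / 64 * Q0 * cN2) 93.

Definition Ms : R -> R :=
  lacpoly (75 / 8 * Q0) (95 / 8 * Q0 * cN1) (115 / 8 * Q0 * cN2) 85.

Definition phase (t : R) : R := b_const * root8 t ^ 10.

Definition dphase (t : R) : R := a_const / 2 * root8 t ^ 2.

Ltac lacpoly_field := unfold lacpoly; rewrite ?INR_IZR_INZ; simpl Z.of_nat; simpl Nat.add; field.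

Lemma is_derive_gs t : 0 < t -> is_derive (fun t => gs (root8 t)) t (hs (root8 t) * dphase t).
Proof.
  intros Ht. assert (Hs := root8_pos t). eapply is_derive_ext; [reflexivity |].
  replace (hs (root8 t) * dphase t) with
    (lacpoly (- INR 75 * - (Q0 * a_const / 2) / 8) (- INR (75 + 20) * (Q0 * a_const / 2 * cN1) / 8)
      (- INR (75 + 40) * - (Q0 * a_const / 2 * cN2) / 8) (75 + 8) (root8 t)).
  2:{ unfold hs, dphase. lacpoly_field. lra. }
  apply is_derive_lacpoly_root8, Ht.
Qed.

Lemma is_derive_hs t : 0 < t -> is_derive (fun t => hs (root8 t)) t (dhs (root8 t)).
Proof.
  intros Ht. assert (Hs := root8_pos t). eapply is_derive_ext; [reflexivity |].
  replace (dhs (root8 t)) with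
    (lacpoly (- INR 85 * (75 / 8 * Q0) / 8) (- INR (85 + 20) * - (95 / 8 * Q0 * cN1) / 8)
      (- INR (85 + 40) * (115 / 8 * Q0 * cN2) / 8) (85 + 8) (root8 t)).
  2:{ unfold dhs. lacpoly_field. lra. }
  apply is_derive_lacpoly_root8, Ht.
Qed.

Lemma is_derive_Ms t : 0 < t -> is_derive (fun t => Ms (root8 t)) t (- ms (root8 t)).
Proof.
  intros Ht. assert (Hs := root8_pos t). eapply is_derive_ext; [reflexivity |].
  replace (- ms (root8 t)) with
    (lacpoly (- INR 85 * (75 / 8 * Q0) / 8) (- INR (85 + 20) * (95 / 8 * Q0 * cN1) / 8)
      (- INR (85 + 40) * (115 / 8 * Q0 * cN2) / 8) (85 + 8) (root8 t)).
  2:{ unfold ms. lacpoly_field. lra. }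
  apply is_derive_lacpoly_root8, Ht.
Qed.

Lemma is_derive_phase t : 0 < t -> is_derive phase t (dphase t).
Proof.
  intros Ht. assert (Hs := root8_pos t).
  replace (dphase t) with (b_const * (INR 10 * 1 * root8 t ^ 9) / (8 * root8 t ^ 7)).
  2:{ unfold dphase, a_const. rewrite INR_IZR_INZ. simpl. field. lra. }
  apply (is_derive_comp_root8 (fun σ => b_const * σ ^ 10)); [exact Ht |].
  apply is_derive_scal, (is_derive_pow (fun σ => σ)), (is_derive_id (K := R_AbsRing)).
Qed.

Lemma ex_derive_phase (e t : R) : 0 < t -> ex_derive (fun t => e * phase t) t.
Proof. intros Ht. eexists. apply is_derive_scal, is_derive_phase, Ht. Qed.

Lemma kernel_amplitude t : 0 < t -> / root8 t ^ 5 * (t * Defs.N0 t) = Fs (root8 t).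
Proof.
  intros Ht. assert (H6 : 0 < sqrt 6) by (apply sqrt_lt_R0; lra).
  unfold Defs.N0.
  replace (-19/2) with (IZR (-76) / 8) by lra.
  replace (-5/2) with (IZR (-20) / 8) by lra.
  replace (-5) with (IZR (-40) / 8) by lra.
  rewrite !Rpower_root8 by exact Ht.
  assert (Hs := root8_pos t). assert (H8 := root8_pow8 t Ht).
  set (σ := root8 t) in *. clearbody σ. subst t.
  change (powerRZ σ (-76)) with (/ σ ^ 76).
  change (powerRZ σ (-20)) with (/ σ ^ 20).
  change (powerRZ σ (-40)) with (/ σ ^ 40).
  assert (Hsqrt : 8 * sqrt 6 = 48 / sqrt 6).
  { replace 48 with (8 * (sqrt 6 * sqrt 6)) by (rewrite sqrt_sqrt; lra). field. lra. }
  unfold Fs, lacpoly, cN1, cN2, Q0. rewrite a_const_sqr, Hsqrt. simpl Nat.add. field. split; lra.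
Qed.

Lemma Fs_eq t : 0 < t -> Fs (root8 t) = gs (root8 t) * dphase t.
Proof. intros Ht. assert (Hs := root8_pos t). unfold Fs, gs, dphase. lacpoly_field. lra. Qed.

Lemma Rabs_dhs_le σ : 0 < σ -> Rabs (dhs σ) <= ms σ.
Proof.
  intros Hσ. unfold dhs, ms. eapply Rle_trans; [apply Rabs_lacpoly_le, Hσ |].
  assert (Hc1 := cN1_pos).
  unfold Q0, cN2 in *. rewrite !Rabs_Ropp, !Rabs_pos_eq by (apply Rmult_le_pos; lra || nra).
  apply Rle_refl.
Qed.

Lemma Ms_nonneg (σ : R) : 0 < σ -> 0 <= Ms σ.
Proof.
  intros Hσ. assert (H1 := cN1_pos). unfold Ms, Q0, cN2.
  apply lacpoly_nonneg; [exact Hσ | lra | nra | lra].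
Qed.

Lemma filterlim_Ms : filterlim (fun t => Ms (root8 t)) (Rbar_locally p_infty) (locally 0).
Proof.
  apply (filterlim_infty_of_le_div (V := R_NormedModule) _ _ 1
    (Rabs (75 / 8 * Q0) + Rabs (95 / 8 * Q0 * cN1) + Rabs (115 / 8 * Q0 * cN2))).
  intros t Ht. apply Rle_trans with (Rabs (Ms (root8 t))).
  - apply Req_le. unfold minus, plus, opp, norm; simpl. unfold abs; simpl. f_equal. ring.
  - apply Rabs_lacpoly_le_div; [exact Ht | lia].
Qed.

(** * Integration by parts of the kernels *)

Definition G (e t : R) : C := (RtoC (Rpower t (-5/8)) * cexpi (e * (b_const * Rpower t (5/4))))%C.

Lemma G1_eq : G1 = G (-1).
Proof.
  apply functional_extensionality. intros t. unfold G1, G. f_equal. f_equal. ring.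
Qed.

Lemma G2_eq : G2 = G 1.
Proof.
  apply functional_extensionality. intros t. unfold G2, G. rewrite Rmult_1_l. reflexivity.
Qed.

Definition kern (e t : R) : C := (G e t * RtoC (t * Defs.N0 t))%C.

Definition prim (e t : R) : C := osc (hs (root8 t)) (- gs (root8 t)) e (phase t).

Definition rem (e t : R) : C := osc (dhs (root8 t)) 0 e (phase t).

Lemma G_root8 (e t : R) : 0 < t -> G e t = osc (/ root8 t ^ 5) 0 e (phase t).
Proof.
  intros Ht. unfold G, osc, phase. rewrite Rmult_0_r.
  replace (-5/8) with (IZR (-5) / 8) by lra. replace (5/4) with (IZR 10 / 8) by lra.
  rewrite !Rpower_root8 by exact Ht. reflexivity.
Qed.

Lemma kern_root8 (e t : R) : 0 < t -> kern e t = osc (Fs (root8 t)) 0 e (phase t).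
Proof.
  intros Ht. unfold kern. rewrite G_root8, <- kernel_amplitude by exact Ht.
  unfold osc, Cmult, RtoC; simpl. f_equal; ring.
Qed.

Lemma is_derive_prim (e t : R) : e = 1 \/ e = -1 -> 0 < t ->
  is_derive (V := C_R_NormedModule) (prim e) t (kern e t + rem e t)%C.
Proof.
  intros He Ht. unfold prim, osc.
  replace (kern e t + rem e t)%C with
    (((dhs (root8 t), - e * (hs (root8 t) * dphase t))%R
      + Ci * RtoC (e * dphase t) * (hs (root8 t), e * - gs (root8 t))%R) * cexpi (e * phase t))%C.
  2:{ rewrite kern_root8, Fs_eq by exact Ht. unfold rem, osc.
      destruct (cexpi (e * phase t)) as [c s].
      unfold Cplus, Cmult, Ci, RtoC; simpl. destruct He as [-> | ->]; f_equal; ring. }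
  apply (is_derive_osc (fun t => hs (root8 t)) (fun t => e * - gs (root8 t)) (fun t => e * phase t)).
  - apply is_derive_hs, Ht.
  - apply (is_derive_ext (fun t => - e * gs (root8 t))); [intros; simpl; ring |].
    apply is_derive_scal, is_derive_gs, Ht.
  - apply is_derive_scal, is_derive_phase, Ht.
Qed.

Lemma continuous_kern (e t : R) : 0 < t -> continuous (U := C_R_NormedModule) (kern e) t.
Proof.
  intros Ht.
  apply (continuous_ext_loc _ (fun t => osc (Fs (root8 t)) 0 e (phase t))).
  { apply (filter_imp (fun y => 0 < y)); [| exact (locally_gt 0 t Ht)].
    intros y Hy. symmetry. apply kern_root8, Hy. }
  apply (continuous_osc (fun t => Fs (root8 t)) (fun _ => e * 0) (fun t => e * phase t)).
  - apply ex_derive_lacpoly_root8, Ht.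
  - apply ex_derive_const.
  - apply ex_derive_phase, Ht.
Qed.

Lemma continuous_rem (e t : R) : 0 < t -> continuous (U := C_R_NormedModule) (rem e) t.
Proof.
  intros Ht. apply (continuous_osc (fun t => dhs (root8 t)) (fun _ => e * 0) (fun t => e * phase t)).
  - apply ex_derive_lacpoly_root8, Ht.
  - apply ex_derive_const.
  - apply ex_derive_phase, Ht.
Qed.

Lemma filterlim_prim (e : R) : e = 1 \/ e = -1 ->
  filterlim (prim e) (Rbar_locally p_infty) (locally (zero : C_R_CompleteNormedModule)).
Proof.
  intros He. apply (filterlim_C_infty_of_Cmod_le _ 1
    ((Rabs (75 / 8 * Q0) + Rabs (- (95 / 8 * Q0 * cN1)) + Rabs (115 / 8 * Q0 * cN2))
     + (Rabs (- (Q0 * a_const / 2)) + Rabs (Q0 * a_const / 2 * cN1) + Rabs (- (Q0 * a_const / 2 * cN2))))).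
  intros t Ht. eapply Rle_trans; [apply Cmod_osc_le, He |].
  rewrite Rabs_Ropp, Rdiv_plus_distr. apply Rplus_le_compat; apply Rabs_lacpoly_le_div; lia || lra.
Qed.

Lemma is_RInt_gen_kern (e x : R) : e = 1 \/ e = -1 -> 1 <= x ->
  exists R, is_RInt_gen (V := C_R_NormedModule) (kern e) (Rbar_locally p_infty) (at_point x) (prim e x - R)%C
            /\ Cmod R <= Ms (root8 x).
Proof.
  intros He Hx.
  destruct (is_RInt_gen_by_parts (V := C_R_CompleteNormedModule) (kern e) (rem e) (prim e)
              (fun t => ms (root8 t)) (fun t => Ms (root8 t)) x) as [R [HR HRM]].
  - intros t Ht. apply is_derive_prim; [exact He | lra].
  - intros t Ht. apply continuous_kern. lra.
  - intros t Ht. apply continuous_rem. lra.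
  - intros t Ht. rewrite <- Cmod_norm. unfold rem.
    eapply Rle_trans; [apply Cmod_osc_le, He |].
    rewrite Rabs_R0, Rplus_0_r. apply Rabs_dhs_le, root8_pos.
  - intros t Ht. apply is_derive_Ms. lra.
  - intros t Ht. apply (ex_derive_continuous (V := R_NormedModule)), ex_derive_lacpoly_root8. lra.
  - intros t Ht. apply Ms_nonneg, root8_pos.
  - apply filterlim_prim, He.
  - apply filterlim_Ms.
  - exists R. rewrite Cmod_norm. split; assumption.
Qed.

(** * Variation of parameters *)

Definition combination (a : R) (u v J1 J2 : C) : C :=
  (RtoC ((-1) ^ 1) / (Ci * RtoC a) * u * J1 + RtoC ((-1) ^ 2) / (Ci * RtoC a) * v * J2)%C.

Lemma Ci_mul_RtoC_neq_0 (a : R) : a <> 0 -> (Ci * RtoC a)%C <> 0%C.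
Proof. intros Ha H. apply (f_equal Im) in H. unfold Ci, RtoC, Cmult in H. simpl in H. lra. Qed.

Lemma combination_osc (a θ α β g h : R) (R1 R2 : C) : a <> 0 ->
  combination a (osc α β (-1) θ) (osc α β 1 θ) (osc h (- g) 1 θ - R1) (osc h (- g) (-1) θ - R2)
  = (RtoC (2 / a * (α * g + β * h))
     + / (Ci * RtoC a) * (Cconj (α, β) * cexpi (- θ) * R1 - (α, β) * cexpi θ * R2))%C.
Proof.
  intros Ha.
  assert (Hnz : RtoC a <> 0%C /\ Ci <> 0%C).
  { split; intros H; [apply (f_equal Re) in H | apply (f_equal Im) in H]; simpl in H; lra. }
  unfold combination. rewrite !osc_minus_one, !osc_one.
  set (q := (α, β) : C). set (w := (h, - g)%R : C).
  assert (Hsign1 : RtoC ((-1) ^ 1) = (-1)%C) by (unfold RtoC; simpl; f_equal; ring).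
  assert (Hsign2 : RtoC ((-1) ^ 2) = 1%C) by (unfold RtoC; simpl; f_equal; ring).
  assert (Hmain : (q * Cconj w - Cconj q * w)%C = (RtoC (2 / a * (α * g + β * h)) * (Ci * RtoC a))%C).
  { unfold q, w, Cconj, Cminus, Cmult, Cplus, Copp, RtoC, Ci; simpl. f_equal; field; exact Ha. }
  rewrite Hsign1, Hsign2.
  transitivity (/ (Ci * RtoC a) * (q * Cconj w - Cconj q * w) * (cexpi (- θ) * cexpi θ)
                + / (Ci * RtoC a) * (Cconj q * cexpi (- θ) * R1 - q * cexpi θ * R2))%C.
  - field. exact Hnz.
  - rewrite Hmain, cexpi_opp_mul. field. exact Hnz.
Qed.

Lemma Cmod_combination_le (a θ α β g h Mx : R) (R1 R2 : C) :
  0 < a -> Cmod R1 <= Mx -> Cmod R2 <= Mx ->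
  Cmod (combination a (osc α β (-1) θ) (osc α β 1 θ) (osc h (- g) 1 θ - R1) (osc h (- g) (-1) θ - R2))
  <= 2 / a * Rabs (α * g + β * h) + 2 / a * Cmod (α, β) * Mx.
Proof.
  intros Ha HR1 HR2. rewrite combination_osc by lra.
  eapply Rle_trans; [apply Cmod_triangle |]. rewrite Cmod_R.
  assert (Hmid : Rabs (2 / a * (α * g + β * h)) = 2 / a * Rabs (α * g + β * h)).
  { rewrite Rabs_mult, Rabs_pos_eq; [reflexivity |]. apply Rlt_le, Rdiv_lt_0_compat; lra. }
  rewrite Hmid. apply Rplus_le_compat_l.
  rewrite Cmod_mult, Cmod_inv by (apply Ci_mul_RtoC_neq_0; lra).
  rewrite Cmod_mult, Cmod_Ci, Cmod_R, Rabs_pos_eq, Rmult_1_l by lra.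
  eapply Rle_trans; [apply Rmult_le_compat_l; [apply Rlt_le, Rinv_0_lt_compat, Ha | apply Cmod_triangle] |].
  rewrite Cmod_opp, !Cmod_mult, Cmod_conj, !Cmod_cexpi, !Rmult_1_r.
  assert (Hq := Cmod_ge_0 (α, β)).
  apply Rle_trans with (/ a * (Cmod (α, β) * Mx + Cmod (α, β) * Mx)).
  - apply Rmult_le_compat_l; [apply Rlt_le, Rinv_0_lt_compat, Ha |].
    apply Rplus_le_compat; apply Rmult_le_compat_l; assumption.
  - apply Req_le. field. lra.
Qed.

Lemma combination_cross (a : R) (u v z : C) : combination a u v (v * z) (u * z) = 0%C.
Proof.
  unfold combination. replace (RtoC ((-1) ^ 1)) with (- RtoC ((-1) ^ 2))%C
    by (unfold RtoC, Copp; simpl; f_equal; ring).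
  unfold Cdiv. ring.
Qed.

Lemma is_derive_combination (a x : R) (u v J1 J2 : R -> C) (du dv dJ1 dJ2 : C) :
  is_derive (V := C_R_NormedModule) u x du -> is_derive (V := C_R_NormedModule) v x dv ->
  is_derive (V := C_R_NormedModule) J1 x dJ1 -> is_derive (V := C_R_NormedModule) J2 x dJ2 ->
  is_derive (V := C_R_NormedModule) (fun x => combination a (u x) (v x) (J1 x) (J2 x)) x
    (combination a du dv (J1 x) (J2 x) + combination a (u x) (v x) dJ1 dJ2)%C.
Proof.
  intros Hu Hv HJ1 HJ2. unfold combination.
  set (k1 := (RtoC ((-1) ^ 1) / (Ci * RtoC a))%C). set (k2 := (RtoC ((-1) ^ 2) / (Ci * RtoC a))%C).
  assert (Hterm : forall (w K : R -> C) dw dK k, is_derive (V := C_R_NormedModule) w x dw ->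
            is_derive (V := C_R_NormedModule) K x dK ->
            is_derive (V := C_R_NormedModule) (fun x => k * w x * K x)%C x (k * dw * K x + k * w x * dK)%C).
  { intros w K dw dK k Hw HK.
    apply (is_derive_ext (fun x => k * (w x * K x))%C); [intros; apply Cmult_assoc |].
    replace (k * dw * K x + k * w x * dK)%C with ((0 * (w x * K x) + k * (dw * K x + w x * dK)))%C by ring.
    apply (is_derive_Cmult (fun _ => k)); [apply (is_derive_const (K := R_AbsRing) (V := C_R_NormedModule)) |].
    apply is_derive_Cmult; assumption. }
  replace (k1 * du * J1 x + k2 * dv * J2 x + (k1 * u x * dJ1 + k2 * v x * dJ2))%C
    with ((k1 * du * J1 x + k1 * u x * dJ1) + (k2 * dv * J2 x + k2 * v x * dJ2))%C by ring.
  apply (is_derive_plus (K := R_AbsRing) (V := C_R_NormedModule)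
           (fun x => k1 * u x * J1 x)%C (fun x => k2 * v x * J2 x)%C);
    apply Hterm; assumption.
Qed.

Definition J (e x : R) : C := int_from_infty (kern e) x.

Lemma w0_eq (x : R) : w0 x = combination a_const (G (-1) x) (G 1 x) (J 1 x) (J (-1) x).
Proof. unfold w0, combination, J, kern. rewrite G1_eq, G2_eq. reflexivity. Qed.

Definition dG (e t : R) : C := osc (- 5 / 8 / root8 t ^ 13) (dphase t / root8 t ^ 5) e (phase t).

Lemma is_derive_G (e t : R) : 0 < t -> is_derive (V := C_R_NormedModule) (G e) t (dG e t).
Proof.
  intros Ht. assert (Hs := root8_pos t).
  apply (is_derive_ext_loc (fun t => osc (/ root8 t ^ 5) 0 e (phase t))).
  { apply (filter_imp (fun y => 0 < y)); [| exact (locally_gt 0 t Ht)].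
    intros y Hy. symmetry. apply G_root8, Hy. }
  replace (dG e t) with
    (((- INR 5 / 8 / root8 t ^ (5 + 8), 0)%R + Ci * RtoC (e * dphase t) * (/ root8 t ^ 5, e * 0)%R)
      * cexpi (e * phase t))%C.
  2:{ unfold dG, osc. destruct (cexpi (e * phase t)) as [c s].
      unfold Cplus, Cmult, Ci, RtoC; simpl. f_equal; field; lra. }
  apply (is_derive_osc (fun t => / root8 t ^ 5) (fun _ => e * 0) (fun t => e * phase t)).
  - apply is_derive_inv_pow_root8, Ht.
  - apply (is_derive_const (K := R_AbsRing) (V := R_NormedModule)).
  - apply is_derive_scal, is_derive_phase, Ht.
Qed.

Lemma is_derive_J (e x : R) : e = 1 \/ e = -1 -> 1 < x ->
  is_derive (V := C_R_NormedModule) (J e) x (kern e x).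
Proof.
  intros He Hx. destruct (is_RInt_gen_kern e 1 He (Rle_refl 1)) as [R [HR _]].
  apply (is_derive_int_from_infty (kern e) 1 x _ HR); [| exact Hx].
  intros t Ht. apply continuous_kern. lra.
Qed.

Lemma is_derive_w0 (x : R) : 1 < x ->
  is_derive (V := C_R_NormedModule) w0 x (combination a_const (dG (-1) x) (dG 1 x) (J 1 x) (J (-1) x)).
Proof.
  intros Hx.
  apply (is_derive_ext (fun x => combination a_const (G (-1) x) (G 1 x) (J 1 x) (J (-1) x))).
  { intros t. symmetry. apply w0_eq. }
  (* Differentiating the integrals produces [G1 k2] and [G2 k1], which cancel. *)
  rewrite <- (Cplus_0_r (combination _ _ _ _ _)),
          <- (combination_cross a_const (G (-1) x) (G 1 x) (RtoC (x * Defs.N0 x))).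
  apply is_derive_combination;
    [apply is_derive_G; lra | apply is_derive_G; lra | apply is_derive_J; lra | apply is_derive_J; lra].
Qed.

Lemma Cmod_combination_J_le (α β x : R) : 1 <= x ->
  Cmod (combination a_const (osc α β (-1) (phase x)) (osc α β 1 (phase x)) (J 1 x) (J (-1) x))
  <= 2 / a_const * Rabs (α * gs (root8 x) + β * hs (root8 x)) + 2 / a_const * Cmod (α, β) * Ms (root8 x).
Proof.
  intros Hx.
  destruct (is_RInt_gen_kern 1 x (or_introl eq_refl) Hx) as [R1 [HJ1 HR1]].
  destruct (is_RInt_gen_kern (-1) x (or_intror eq_refl) Hx) as [R2 [HJ2 HR2]].
  unfold J. rewrite (int_from_infty_correct _ _ _ HJ1), (int_from_infty_correct _ _ _ HJ2).
  apply Cmod_combination_le; [apply a_const_pos | exact HR1 | exact HR2].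
Qed.

Lemma Cmod_w0_le (x : R) : 1 <= x ->
  Cmod (w0 x) <= 2 / a_const * Rabs (/ root8 x ^ 5 * gs (root8 x))
                 + 2 / a_const * (/ root8 x ^ 5) * Ms (root8 x).
Proof.
  intros Hx. assert (Hs := root8_pos x).
  rewrite w0_eq, !G_root8 by lra.
  eapply Rle_trans; [apply Cmod_combination_J_le, Hx |].
  rewrite Rmult_0_l, Rplus_0_r. change (/ root8 x ^ 5, 0) with (RtoC (/ root8 x ^ 5)).
  rewrite Cmod_R, (Rabs_pos_eq (/ root8 x ^ 5)); [apply Rle_refl |]. apply Rlt_le, Rinv_0_lt_compat, pow_lt, Hs.
Qed.

Lemma Cmod_dw0_le (x : R) : 1 <= x ->
  Cmod (combination a_const (dG (-1) x) (dG 1 x) (J 1 x) (J (-1) x))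
  <= 2 / a_const * Rabs (- 5 / 8 / root8 x ^ 13 * gs (root8 x) + dphase x / root8 x ^ 5 * hs (root8 x))
     + 2 / a_const * (5 / 8 / root8 x ^ 13 + dphase x / root8 x ^ 5) * Ms (root8 x).
Proof.
  intros Hx. assert (Hs := root8_pos x). assert (HMs := Ms_nonneg _ Hs).
  assert (Hpos : 0 < 2 / a_const) by (apply Rdiv_lt_0_compat; [lra | apply a_const_pos]).
  unfold dG. eapply Rle_trans; [apply Cmod_combination_J_le, Hx |].
  apply Rplus_le_compat_l, Rmult_le_compat_r, Rmult_le_compat_l; [exact HMs | lra |].
  eapply Rle_trans; [apply Cmod_pair_le |].
  assert (H13 : 0 < / root8 x ^ 13) by (apply Rinv_0_lt_compat, pow_lt, Hs).
  assert (Hdθ : 0 <= dphase x / root8 x ^ 5).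
  { unfold dphase. apply Rdiv_le_0_compat; [| apply pow_lt, Hs].
    generalize a_const_pos (pow2_ge_0 (root8 x)). intros. nra. }
  unfold Rdiv at 1 3. apply Rplus_le_compat; apply Rabs_le; lra.
Qed.

(** * Numerical bounds *)

Lemma cN1_le : cN1 <= 556 / 100000.
Proof.
  assert (H6 : 2449 / 1000 <= sqrt 6).
  { rewrite <- (sqrt_square (2449 / 1000)) by lra. apply sqrt_le_1_alt. lra. }
  unfold cN1. apply Rle_div_l; [nra |]. nra.
Qed.

Lemma two_div_a_const_le : 2 / a_const <= 4519 / 10000.
Proof.
  set (q := Rpower 24 (1/4)).
  assert (Hq : 0 < q) by apply exp_pos.
  assert (Hq4 : q ^ 4 = 24).
  { unfold q. rewrite <- Rpower_pow, Rpower_mult by apply exp_pos.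
    replace (1/4 * INR 4) with 1 by (simpl; field). apply Rpower_1. lra. }
  assert (Hql : 22129 / 10000 <= q).
  { destruct (Rlt_or_le q (22129 / 10000)) as [H | H]; [| exact H].
    assert (q ^ 4 <= (22129 / 10000) ^ 4) by (apply pow_incr; lra). lra. }
  replace a_const with (2 * q) by (unfold a_const, b_const, q; field).
  apply Rle_div_l; lra.
Qed.

(* [v = x^(-5/4) ≤ (11/2)^(-5/4) < 0.11873] and [al = 2/a = 24^(-1/4) < 0.4519]. *)
Lemma numeric_w0 (v al : R) : 0 < v <= 11873 / 100000 -> 0 < al <= 4519 / 10000 ->
  Q0 * Rabs (1 - cN1 * v ^ 2 + cN2 * v ^ 4) + al * Q0 * v * (75/8 + 95/8 * cN1 * v ^ 2 + 115/8 * cN2 * v ^ 4)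
  <= 15 / 2.
Proof.
  intros Hv Hal. assert (Hc1 := cN1_pos). assert (Hc1' := cN1_le).
  assert (Hv2 : 0 <= v ^ 2 <= 141 / 10000) by (split; nra).
  assert (Hv4 : 0 <= v ^ 4 <= 2 / 10000) by (replace (v ^ 4) with ((v ^ 2) ^ 2) by ring; split; nra).
  assert (Hc1v : 0 <= cN1 * v ^ 2 <= 8 / 100000) by (split; nra).
  assert (Hc2v : 0 <= cN2 * v ^ 4 <= 3 / 1000000) by (unfold cN2; split; nra).
  assert (Hav : 0 <= al * v <= 5366 / 100000) by (split; nra).
  rewrite Rabs_pos_eq by lra. unfold Q0. nra.
Qed.

Lemma numeric_dw0 (v al : R) : 0 < v <= 11873 / 100000 -> 0 < al <= 4519 / 10000 ->
  Q0 * v * (Rabs (5/8 * (1 - cN1 * v ^ 2 + cN2 * v ^ 4) + (75/8 - 95/8 * cN1 * v ^ 2 + 115/8 * cN2 * v ^ 4))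
            + (al * (5/8) * v + 1) * (75/8 + 95/8 * cN1 * v ^ 2 + 115/8 * cN2 * v ^ 4))
  <= 885 / 100.
Proof.
  intros Hv Hal. assert (Hc1 := cN1_pos). assert (Hc1' := cN1_le).
  assert (Hv2 : 0 <= v ^ 2 <= 141 / 10000) by (split; nra).
  assert (Hv4 : 0 <= v ^ 4 <= 2 / 10000) by (replace (v ^ 4) with ((v ^ 2) ^ 2) by ring; split; nra).
  assert (Hc1v : 0 <= cN1 * v ^ 2 <= 8 / 100000) by (split; nra).
  assert (Hc2v : 0 <= cN2 * v ^ 4 <= 3 / 1000000) by (unfold cN2; split; nra).
  assert (Hav : 0 <= al * v <= 5366 / 100000) by (split; nra).
  set (BM := 75/8 + 95/8 * cN1 * v ^ 2 + 115/8 * cN2 * v ^ 4).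
  assert (HBM : 0 <= BM <= 93761 / 10000) by (unfold BM; split; lra).
  assert (Hfac : 0 <= (al * (5/8) * v + 1) * BM <= 96906 / 10000).
  { split; [nra |]. apply Rle_trans with ((5366 / 100000 * (5/8) + 1) * (93761 / 10000)); [| lra].
    apply Rmult_le_compat; lra. }
  rewrite Rabs_pos_eq by lra.
  apply Rle_trans with (Q0 * v * (100001 / 10000 + 96906 / 10000)).
  - apply Rmult_le_compat_l; [unfold Q0; nra | lra].
  - unfold Q0. nra.
Qed.

Lemma Rabs_scale (k w y z : R) : 0 < k -> 0 < w -> k * y = w * z -> k * Rabs y = w * Rabs z.
Proof.
  intros Hk Hw E. rewrite <- (Rabs_pos_eq k), <- (Rabs_pos_eq w), <- !Rabs_mult, E by lra. reflexivity.
Qed.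

Lemma w0_bound_root8 (σ : R) : 0 < σ -> / σ ^ 10 <= 11873 / 100000 ->
  2 / a_const * Rabs (/ σ ^ 5 * gs σ) + 2 / a_const * / σ ^ 5 * Ms σ <= 15 / 2 * / σ ^ 80.
Proof.
  intros Hσ Hv. assert (Ha := a_const_pos).
  assert (Hal : 0 < 2 / a_const <= 4519 / 10000)
    by (split; [apply Rdiv_lt_0_compat; lra | apply two_div_a_const_le]).
  assert (H80 : 0 < / σ ^ 80) by (apply Rinv_0_lt_compat, pow_lt, Hσ).
  assert (Hv0 : 0 < / σ ^ 10) by (apply Rinv_0_lt_compat, pow_lt, Hσ).
  set (v := / σ ^ 10) in *.
  assert (E1 : 2 / a_const * Rabs (/ σ ^ 5 * gs σ)
               = / σ ^ 80 * Rabs (- (Q0 * (1 - cN1 * v ^ 2 + cN2 * v ^ 4)))).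
  { apply Rabs_scale; [lra | exact H80 |]. unfold gs, lacpoly, v. simpl Nat.add. field. split; lra. }
  assert (E2 : 2 / a_const * / σ ^ 5 * Ms σ
               = / σ ^ 80 * (2 / a_const * Q0 * v * (75/8 + 95/8 * cN1 * v ^ 2 + 115/8 * cN2 * v ^ 4))).
  { unfold Ms, lacpoly, v. simpl Nat.add. field. split; lra. }
  rewrite E1, E2, Rabs_Ropp, Rabs_mult, (Rabs_pos_eq Q0) by (unfold Q0; lra).
  rewrite <- Rmult_plus_distr_l, Rmult_comm. apply Rmult_le_compat_r; [lra |].
  apply numeric_w0; lra.
Qed.

Lemma dw0_bound_root8 (σ : R) : 0 < σ -> / σ ^ 10 <= 11873 / 100000 ->
  2 / a_const * Rabs (- 5 / 8 / σ ^ 13 * gs σ + a_const / 2 * σ ^ 2 / σ ^ 5 * hs σ)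
  + 2 / a_const * (5 / 8 / σ ^ 13 + a_const / 2 * σ ^ 2 / σ ^ 5) * Ms σ <= 885 / 100 * / σ ^ 78.
Proof.
  intros Hσ Hv. assert (Ha := a_const_pos).
  assert (Hal : 0 < 2 / a_const <= 4519 / 10000)
    by (split; [apply Rdiv_lt_0_compat; lra | apply two_div_a_const_le]).
  assert (H78 : 0 < / σ ^ 78) by (apply Rinv_0_lt_compat, pow_lt, Hσ).
  assert (Hv0 : 0 < / σ ^ 10) by (apply Rinv_0_lt_compat, pow_lt, Hσ).
  set (v := / σ ^ 10) in *.
  assert (HQv : 0 < Q0 * v) by (unfold Q0; nra).
  assert (E1 : 2 / a_const * Rabs (- 5 / 8 / σ ^ 13 * gs σ + a_const / 2 * σ ^ 2 / σ ^ 5 * hs σ)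
               = / σ ^ 78 * Rabs (Q0 * v * (5/8 * (1 - cN1 * v ^ 2 + cN2 * v ^ 4)
                                            + (75/8 - 95/8 * cN1 * v ^ 2 + 115/8 * cN2 * v ^ 4)))).
  { apply Rabs_scale; [lra | exact H78 |]. unfold gs, hs, lacpoly, v. simpl Nat.add. field. split; lra. }
  assert (E2 : 2 / a_const * (5 / 8 / σ ^ 13 + a_const / 2 * σ ^ 2 / σ ^ 5) * Ms σ
               = / σ ^ 78 * (Q0 * v * ((2 / a_const * (5/8) * v + 1)
                                       * (75/8 + 95/8 * cN1 * v ^ 2 + 115/8 * cN2 * v ^ 4)))).
  { unfold Ms, lacpoly, v. simpl Nat.add. field. split; lra. }
  rewrite E1, E2, Rabs_mult, (Rabs_pos_eq (Q0 * v)) by lra.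
  rewrite <- Rmult_plus_distr_l, <- Rmult_plus_distr_l, Rmult_comm.
  apply Rmult_le_compat_r; [lra |]. apply numeric_dw0; lra.
Qed.

Lemma inv_pow10_root8_le (x : R) : 11 / 2 <= x -> / root8 x ^ 10 <= 11873 / 100000.
Proof.
  intros Hx. assert (Hσ : 12375 / 10000 <= root8 x) by (apply root8_ge; lra).
  assert (H10 : 100000 / 11873 <= root8 x ^ 10).
  { replace (root8 x ^ 10) with (root8 x ^ 8 * root8 x ^ 2) by ring.
    rewrite root8_pow8 by lra. nra. }
  rewrite <- (Rinv_inv (11873 / 100000)). apply Rinv_le_contravar; [lra |].
  replace (/ (11873 / 100000)) with (100000 / 11873) by field. exact H10.
Qed.

Theorem lemma3p1 :
  forall x : R, 11/2 <= x ->
    Cmod (w0 x) <= 15/2 * Rpower x (-10) /\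
    exists dw : C, is_derive (V := C_R_NormedModule) w0 x dw /\
                   Cmod dw <= 885/100 * Rpower x (-39/4).
Proof.
  intros x Hx.
  assert (Hσ := root8_pos x). assert (Hv := inv_pow10_root8_le x Hx).
  replace (-10) with (- INR 80 / 8) by (rewrite INR_IZR_INZ; simpl; field).
  replace (-39/4) with (- INR 78 / 8) by (rewrite INR_IZR_INZ; simpl; field).
  rewrite !Rpower_root8_neg by lra.
  split.
  - eapply Rle_trans; [apply Cmod_w0_le; lra |]. apply w0_bound_root8; assumption.
  - eexists. split; [apply is_derive_w0; lra |].
    eapply Rle_trans; [apply Cmod_dw0_le; lra |]. apply dw0_bound_root8; assumption.
Qed.
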